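(* Let $N$ be the set of the 24 neutral triads $\{x,x+7,x+14\}\subset\mathbb{Z}_{24}$, $x\in\mathbb{Z}_{24}$. The map $L:N\to N$, $L\langle x,x+7,x+14\rangle=I_{2x+21}\langle x,x+7,x+14\rangle$ (where $I_n(y)=-y+n$ mod 24 componentwise), generates a cyclic group of permutations of $N$ isomorphic to $\mathbb{Z}_{24}$.
   Context: A neutral triad with root $x$ is written $\langle x,x+7,x+14\rangle$; in general the Leading Tone Exchange function is $L\langle y_1,y_2,y_3\rangle=I_{y_2+y_3}\langle y_1,y_2,y_3\rangle$, which on neutral triads gives the formula above. Triads are compared as unordered subsets of $\mathbb{Z}_{24}$. *)

From HB Require Import structures.
From mathcomp Require Import all_boot all_order all_algebra all_fingroup.
Set Implicit Arguments. Unset Strict Implicit. Unset Printing Implicit Defensive.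
Import GRing.Theory.
Local Open Scope ring_scope.

Notation Z24 := 'Z_24.

Definition ntriad (x : Z24) : {set Z24} := [set x; x + 7; x + 14].

Definition N : {set {set Z24}} := [set ntriad x | x : Z24].

Definition Inv (n : Z24) (y : Z24) : Z24 := - y + n.

Definition root_of (S : {set Z24}) : Z24 := odflt 0 [pick x | ntriad x == S].

Definition Lmap (S : {set Z24}) : {set Z24} :=
  [set Inv (2 * root_of S + 21) y | y in S].

Definition Ntype := {S : {set Z24} | S \in N}.

From mathcomp Require Import all_boot all_order all_algebra all_fingroup all_solvable ring.
Import GRing.Theory.

Set Implicit Arguments.
Unset Strict Implicit.
Unset Printing Implicit Defensive.

(* L maps the neutral triad with root x to the one with root x + 7, so on N it
   is conjugate, through the bijection x |-> <x, x+7, x+14> of Z_24 onto N, to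
   the translation by 7 of Z_24; as 7 is coprime to 24 this translation, hence
   L, has order 24, and the cyclic group it generates is isomorphic to Z_24. *)

Local Open Scope ring_scope.

Lemma ntriadD (x y : Z24) : ntriad (x + y) = [set z + y | z in ntriad x].
Proof. by rewrite /ntriad !(imsetU, imsetU1, imset_set1) !(addrAC x y). Qed.

Lemma ntriad_inj0 (z : Z24) : ntriad z = ntriad 0 -> z = 0.
Proof.
move=> E.
have mem d : d \in ntriad 0 -> d + z \in ntriad 0.
  by move=> d0; rewrite -E -[z]add0r ntriadD add0r; apply/imsetP; exists d.
(* Stay in bool: closed comparisons in Z24 then compute at once, whereas
   refuting e.g. 7 = 0 :> Z24 by conversion is very slow. *)
apply/eqP; have := mem 14; have := mem 0; rewrite /ntriad !inE !add0r !eqxx /=.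
by move=> /(_ isT) /orP[/orP[]|] /eqP -> /(_ isT).
Qed.

Lemma ntriad_inj : injective ntriad.
Proof.
move=> x y Exy; apply/subr0_eq/ntriad_inj0.
apply: (imset_inj (addIr y)).
by rewrite -!ntriadD subrK add0r.
Qed.

Lemma card_N : #|N| = 24%N.
Proof. by rewrite card_imset ?card_ord //; apply: ntriad_inj. Qed.

Lemma root_of_ntriad (x : Z24) : root_of (ntriad x) = x.
Proof.
rewrite /root_of; case: pickP => [y /eqP /ntriad_inj -> //|].
by move/(_ x); rewrite eqxx.
Qed.

Lemma Inv_ntriad (x : Z24) :
  [set Inv (2 * x + 21) y | y in ntriad x] = ntriad (x + 7).
Proof.
rewrite /ntriad !(imsetU, imsetU1, imset_set1) /Inv.
have -> : - x + (2 * x + 21) = x + 7 + 14 by ring.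
have -> : - (x + 7) + (2 * x + 21) = x + 14 by ring.
have -> : - (x + 14) + (2 * x + 21) = x + 7 by ring.
have -> : x + 7 + 7 = x + 14 by ring.
by apply/setP => z; rewrite !inE -orbA orbC (orbC (z == x + 14)).
Qed.

Lemma Lmap_ntriad (x : Z24) : Lmap (ntriad x) = ntriad (x + 7).
Proof. by rewrite /Lmap root_of_ntriad Inv_ntriad. Qed.

Lemma ntriad_in_N (x : Z24) : ntriad x \in N.
Proof. by apply/imsetP; exists x. Qed.

Lemma Lmap_in_N (S : {set Z24}) : S \in N -> Lmap S \in N.
Proof. by case/imsetP => x _ ->; rewrite Lmap_ntriad ntriad_in_N. Qed.

Definition ntriadN (x : Z24) : Ntype := Sub (ntriad x) (ntriad_in_N x).

Lemma ntriadNP (S : Ntype) : exists x, S = ntriadN x.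
Proof. by case: S => S /[dup] /imsetP [x _ ->] SN; exists x; apply: val_inj. Qed.

Definition LN (S : Ntype) : Ntype := Sub (Lmap (val S)) (Lmap_in_N (valP S)).

Lemma LN_ntriadN (x : Z24) : LN (ntriadN x) = ntriadN (x + 7).
Proof. by apply: val_inj; rewrite /= Lmap_ntriad. Qed.

Lemma LN_inj : injective LN.
Proof.
move=> S T; case: (ntriadNP S) => x ->; case: (ntriadNP T) => y ->.
by rewrite !LN_ntriadN => /(congr1 val) /ntriad_inj /addIr ->.
Qed.

Definition Lperm : {perm Ntype} := perm LN_inj.

Lemma LpermX_ntriadN (x : Z24) n : (Lperm ^+ n)%g (ntriadN x) = ntriadN (x + 7 *+ n).
Proof.
rewrite permX; elim: n => [|n IHn]; first by rewrite addr0.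
by rewrite iterS IHn permE LN_ntriadN -addrA -mulrSr.
Qed.

Lemma Zp_mulrn_eq0 p (x : 'I_p.+1) n : (x *+ n == 0) = (p.+1 %| x * n)%N.
Proof. by rewrite Zp_mulrn. Qed.

Lemma Lperm_expg_eq1 n : (Lperm ^+ n == 1)%g = (24 %| n)%N.
Proof.
have -> : (24 %| n)%N = ((7 : Z24) *+ n == 0) by rewrite Zp_mulrn_eq0 Gauss_dvdr.
apply/eqP/eqP => [/permP /(_ (ntriadN 0)) | n7].
  by rewrite LpermX_ntriadN perm1 add0r => /(congr1 val) /ntriad_inj.
apply/permP => S; case: (ntriadNP S) => x ->.
by rewrite LpermX_ntriadN perm1 n7 addr0.
Qed.

Lemma order_Lperm : #[Lperm]%g = 24%N.
Proof.
apply/eqP; rewrite eqn_dvd order_dvdn Lperm_expg_eq1 dvdnn /=.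
by rewrite -Lperm_expg_eq1 expg_order.
Qed.

Theorem mainTheorem6 :
  #|N| = 24 /\
  (forall x : Z24, Lmap (ntriad x) = [set Inv (2 * x + 21)%R y | y in ntriad x]) /\
  exists p : {perm Ntype},
    (forall S : Ntype, val (p S) = Lmap (val S)) /\
    (<[p]> \isog Zp 24)%g.
Proof.
split; first exact: card_N.
split; first by move=> x; rewrite Lmap_ntriad Inv_ntriad.
exists Lperm; split; first by move=> S; rewrite permE.
by rewrite isog_sym; move: #[Lperm]%g order_Lperm (Zp_isog Lperm) => _ ->.
Qed.
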